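(* Let $B$ be an $(n,n-1)$-blocker for a convex $n$-gon with vertices $0,\dots,n-1$ (indices mod $n$). If the ear-cover $(i-1,i+1)$ does not belong to $B$, then $\deg_B(i)\le 2$.
   Context: An edge $(i,j)$ is the segment between vertices $i,j$; boundary edges are $(i,i+1)$, diagonals are the other edges. Two edges cross if they share an interior point. A triangulation is a maximal set of pairwise non-crossing diagonals. A blocker is a set $B$ of diagonals having a diagonal in common with every triangulation; it is saturated if for every $e\in B$, $B\setminus\{e\}$ is not a blocker. An $(n,k)$-blocker is a saturated blocker of size $k$ for a convex $n$-gon. The diagonal $(i-1,i+1)$ is the ear-cover covering $i$. $\deg_B(i)$ is the number of edges of $B$ incident to $i$. *)

(* Convex n-gon with vertices 0..n-1 (type 'I_n), in cyclic order. *)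
From mathcomp Require Import all_boot.
Set Implicit Arguments. Unset Strict Implicit. Unset Printing Implicit Defensive.

Definition vshift n (i : 'I_n) (k : nat) : 'I_n :=
  Ordinal (ltn_pmod (i + k) (leq_ltn_trans (leq0n i) (ltn_ord i))).

(* An edge (i,j), i <> j, is represented by the 2-element vertex set {i,j}. *)
Definition is_edge n (e : {set 'I_n}) : bool := #|e| == 2.

Definition is_boundary n (e : {set 'I_n}) : bool :=
  [exists i : 'I_n, e == [set i; vshift i 1]].

Definition is_diagonal n (e : {set 'I_n}) : bool :=
  is_edge e && ~~ is_boundary e.

(* In a convex polygon two edges share an interior point iff their endpoints
   strictly interleave in the cyclic order. *)
Definition cross n (e f : {set 'I_n}) : bool :=
  [exists a : 'I_n, exists b : 'I_n, exists c : 'I_n, exists d : 'I_n,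
    [&& (a < c)%N, (c < b)%N, (b < d)%N &
        ((e == [set a; b]) && (f == [set c; d])) ||
        ((e == [set c; d]) && (f == [set a; b]))]].

Definition triangulation n (T : {set {set 'I_n}}) : Prop :=
  (forall e, e \in T -> is_diagonal e) /\
  (forall e f, e \in T -> f \in T -> ~~ cross e f) /\
  (forall d, is_diagonal d -> d \notin T -> exists2 t, t \in T & cross d t).

Definition blocker n (B : {set {set 'I_n}}) : Prop :=
  (forall e, e \in B -> is_diagonal e) /\
  (forall T, triangulation T -> exists2 e, e \in B & e \in T).

Definition saturated n (B : {set {set 'I_n}}) : Prop :=
  forall e, e \in B -> ~ blocker (B :\ e).

Definition nk_blocker n (B : {set {set 'I_n}}) (k : nat) : Prop :=
  blocker B /\ saturated B /\ #|B| = k.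

Definition ear_cover n (i : 'I_n) : {set 'I_n} :=
  [set vshift i n.-1; vshift i 1].

Definition deg n (B : {set {set 'I_n}}) (i : 'I_n) : nat :=
  #|[set e in B | i \in e]|.

From mathcomp Require Import all_boot zify.
Set Implicit Arguments. Unset Strict Implicit. Unset Printing Implicit Defensive.

(* Cutting off the ear at i leaves an (n-1)-gon, identified with the n-gon
   minus i through [lift i]. Adding the ear-cover (i-1, i+1) to a triangulation
   of the (n-1)-gon gives a triangulation of the n-gon, so if the ear-cover is
   not in B, the diagonals of B avoiding i form a blocker B' of the (n-1)-gon
   and |B| = |B'| + deg_B(i).
   Every blocker of an m-gon has at least m-2 diagonals, by induction on m:
   either B contains the m-2 distinct ear-covers of the vertices 1..m-2, or
   contracting a missing one yields a blocker of the (m-1)-gon and removes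
   deg_B(k) >= 1 diagonals (the fan of all diagonals at k is a triangulation).
   Hence deg_B(i) <= (n-1) - (n-3) = 2. *)

Lemma set2_eqE (T : finType) (a b c d : T) :
  ([set a; b] == [set c; d]) = ((a == c) && (b == d)) || ((a == d) && (b == c)).
Proof.
apply/eqP/idP; last by case/orP => /andP[/eqP-> /eqP->] //; exact: setUC.
move=> E.
have ha : a \in [set c; d] by rewrite -E set21.
have hb : b \in [set c; d] by rewrite -E set22.
have hc : c \in [set a; b] by rewrite E set21.
have hd : d \in [set a; b] by rewrite E set22.
move: ha hb hc hd; rewrite !inE.
by do 4! case/orP => /eqP ?; subst; rewrite ?eqxx ?orbT.
Qed.

Lemma eq_ordE n (a b : 'I_n) : (a == b) = (nat_of_ord a == nat_of_ord b).
Proof. by []. Qed.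

Lemma is_edgeP n (e : {set 'I_n}) :
  is_edge e -> exists a b : 'I_n, (a < b)%N /\ e = [set a; b].
Proof.
case/cards2P => x [y [xy ->]].
case: (ltngtP x y) => [lt_xy|lt_yx|/val_inj eq_xy]; first by exists x, y.
  by exists y, x; rewrite setUC.
by rewrite eq_xy eqxx in xy.
Qed.

Lemma is_edge_set2 n (a b : 'I_n) : a != b -> is_edge [set a; b].
Proof. by move=> ab; rewrite /is_edge cards2 ab. Qed.

Lemma diagonalP n (e : {set 'I_n}) : is_diagonal e ->
  exists a b : 'I_n, [/\ (a < b)%N, e = [set a; b] & ~~ is_boundary [set a; b]].
Proof. by case/andP => /is_edgeP [a [b [ab ->]]] nb; exists a, b. Qed.

Lemma diagonalE n (a b : 'I_n) :
  (a < b)%N -> is_diagonal [set a; b] = ~~ is_boundary [set a; b].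
Proof. by move=> ab; rewrite /is_diagonal is_edge_set2 // neq_ltn ab. Qed.

Lemma crossC n (e f : {set 'I_n}) : cross e f = cross f e.
Proof.
rewrite /cross; apply: eq_existsb => a; apply: eq_existsb => b.
apply: eq_existsb => c; apply: eq_existsb => d.
by rewrite !(andbC (f == _)) orbC.
Qed.

Lemma crossE n (a b c d : 'I_n) : (a < b)%N -> (c < d)%N ->
  cross [set a; b] [set c; d] =
  [|| [&& a < c, c < b & b < d] | [&& c < a, a < d & d < b]]%N.
Proof.
move=> ab cd; apply/idP/idP.
  case/existsP => a' /existsP [b' /existsP [c' /existsP [d' /and4P [? ? ? /orP]]]].
  by case=> /andP []; rewrite !set2_eqE !eq_ordE; lia.
case/orP => /and3P [h1 h2 h3]; apply/existsP.
  exists a; apply/existsP; exists b; apply/existsP; exists c; apply/existsP; exists d.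
  by rewrite h1 h2 h3 !eqxx.
exists c; apply/existsP; exists d; apply/existsP; exists a; apply/existsP; exists b.
by rewrite h1 h2 h3 !eqxx orbT.
Qed.

Lemma nocross_refl n (e : {set 'I_n}) : is_edge e -> ~~ cross e e.
Proof. by case/is_edgeP => a [b [ab ->]]; rewrite crossE //; lia. Qed.

Lemma val_vshift1 n (k : 'I_n) :
  nat_of_ord (vshift k 1) = if k.+1 == n then 0 else k.+1.
Proof.
rewrite /vshift /= addn1; case: eqP => [->|h]; first by rewrite modnn.
by rewrite modn_small //; have := ltn_ord k; lia.
Qed.

Lemma val_vshift_pred n (k : 'I_n) :
  nat_of_ord (vshift k n.-1) = if k == 0 :> nat then n.-1 else k.-1.
Proof.
rewrite /vshift /=; have := ltn_ord k; case: eqP => [->|h] kn.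
  by rewrite add0n modn_small //; lia.
have -> : (k + n.-1 = k.-1 + n)%N by lia.
by rewrite modnDr modn_small //; lia.
Qed.

Lemma boundaryE n (a b : 'I_n) : (a < b)%N ->
  is_boundary [set a; b] = (b == a.+1 :> nat) || ((a == 0 :> nat) && (b == n.-1 :> nat)).
Proof.
move=> ab; have bn := ltn_ord b; apply/existsP/idP.
  case=> k; rewrite set2_eqE !eq_ordE val_vshift1; have := ltn_ord k.
  by case: (_ =P n); lia.
case/orP => h; [exists a | exists b]; rewrite set2_eqE !eq_ordE val_vshift1.
  by case: (_ =P n); lia.
by case: (_ =P n); lia.
Qed.

Lemma ear_cover_sorted n (i : 'I_n) : (3 <= n)%N -> exists x y : 'I_n,
  [/\ (x < y)%N, ear_cover i = [set x; y] &
    [|| [&& i == 0 :> nat, x == 1 :> nat & y == n.-1 :> nat],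
        [&& i == n.-1 :> nat, x == 0 :> nat & y == n.-2 :> nat] |
        [&& 0 < i < n.-1, x == i.-1 :> nat & y == i.+1 :> nat]]%N].
Proof.
move=> n3; have := ltn_ord i.
have ex := val_vshift_pred i; have ey := val_vshift1 i.
case: (ltngtP (vshift i n.-1) (vshift i 1)) => h.
- exists (vshift i n.-1), (vshift i 1); split => //.
  by move: ex ey h; case: eqP => ?; case: (_ =P n) => ? -> ->; lia.
- exists (vshift i 1), (vshift i n.-1); split => //; first by rewrite /ear_cover setUC.
  by move: ex ey h; case: eqP => ?; case: (_ =P n) => ? -> ->; lia.
- by move: ex ey h; case: eqP => ?; case: (_ =P n) => ? -> ->; lia.
Qed.

Lemma ear_cover_diagonal n (i : 'I_n) : (4 <= n)%N -> is_diagonal (ear_cover i).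
Proof.
move=> n4; have [x [y [xy -> hx]]] := ear_cover_sorted i (ltnW n4).
by rewrite diagonalE // boundaryE //; move: hx; have := ltn_ord i; lia.
Qed.

Lemma cross_ear_cover n (i : 'I_n) (d : {set 'I_n}) : (3 <= n)%N ->
  is_diagonal d -> i \in d -> cross d (ear_cover i).
Proof.
move=> n3 /diagonalP [a [b [ab -> nb]]].
have [x [y [xy -> hx]]] := ear_cover_sorted i n3.
move: nb; rewrite boundaryE // crossE // !inE !eq_ordE.
by have := ltn_ord i; have := ltn_ord b; move: hx; lia.
Qed.

Section DeleteVertex.

Variables (n : nat) (i : 'I_n).

Lemma val_lift (a : 'I_n.-1) :
  nat_of_ord (lift i a) = if (i <= a)%N then a.+1 else a.
Proof. by rewrite /= /bump; case: leqP. Qed.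

Lemma lift_set2 (a b : 'I_n.-1) : lift i @: [set a; b] = [set lift i a; lift i b].
Proof. by rewrite imsetU1 imset_set1. Qed.

Lemma ltn_lift (a b : 'I_n.-1) : (lift i a < lift i b)%N = (a < b)%N.
Proof. by rewrite !val_lift; case: (leqP i a) => ?; case: (leqP i b) => ?; lia. Qed.

Lemma boundary_unlift (a b : 'I_n.-1) : (a < b)%N ->
  is_boundary [set lift i a; lift i b] -> is_boundary [set a; b].
Proof.
move=> ab; rewrite boundaryE ?ltn_lift // boundaryE //.
have := ltn_ord b; have := ltn_ord i.
by rewrite !val_lift; case: (leqP i a) => ?; case: (leqP i b) => ?; lia.
Qed.

Lemma boundary_lift (a b : 'I_n.-1) : (3 <= n)%N -> (a < b)%N ->
  is_boundary [set a; b] ->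
  is_boundary [set lift i a; lift i b] \/ [set lift i a; lift i b] = ear_cover i.
Proof.
move=> n3 ab; have [x [y [xy -> hx]]] := ear_cover_sorted i n3.
rewrite boundaryE // boundaryE ?ltn_lift // => h.
have lt_b := ltn_ord b; have lt_i := ltn_ord i.
have : (lift i b == (lift i a).+1 :> nat)
       || ((lift i a == 0 :> nat) && (lift i b == n.-1 :> nat))
       || ((lift i a == x :> nat) && (lift i b == y :> nat)).
  by rewrite !val_lift; move: h hx; case: (leqP i a) => ?; case: (leqP i b) => ?; lia.
case/orP => [-> | onear]; [left | right] => //.
by apply/eqP; rewrite set2_eqE !eq_ordE onear.
Qed.

Lemma cross_lift (e f : {set 'I_n.-1}) : is_edge e -> is_edge f ->
  cross (lift i @: e) (lift i @: f) = cross e f.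
Proof.
case/is_edgeP => a [b [ab ->]]; case/is_edgeP => c [d [cd ->]].
by rewrite !lift_set2 !crossE ?ltn_lift.
Qed.

Lemma ear_cover_nocross_lift (e : {set 'I_n.-1}) : (3 <= n)%N -> is_edge e ->
  ~~ cross (ear_cover i) (lift i @: e).
Proof.
move=> n3 /is_edgeP [a [b [ab ->]]]; rewrite lift_set2.
have [x [y [xy -> hx]]] := ear_cover_sorted i n3.
rewrite crossE ?ltn_lift //; have := ltn_ord i; have := ltn_ord b; move: hx.
by rewrite !val_lift; case: (leqP i a) => ?; case: (leqP i b) => ?; lia.
Qed.

Lemma diagonal_lift (e : {set 'I_n.-1}) : is_diagonal e -> is_diagonal (lift i @: e).
Proof.
case/diagonalP => a [b [ab -> nb]]; rewrite lift_set2 diagonalE ?ltn_lift //.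
by apply: contra nb; exact: boundary_unlift.
Qed.

Lemma diagonal_of_lift (e : {set 'I_n.-1}) : (3 <= n)%N ->
  is_diagonal (lift i @: e) -> lift i @: e != ear_cover i -> is_diagonal e.
Proof.
move=> n3 de not_ear.
have : is_edge e by rewrite /is_edge -(card_imset _ (@lift_inj _ i)); case/andP: de.
case/is_edgeP => a [b [ab E]]; subst e; rewrite diagonalE //; apply/negP => bnd.
move: de not_ear; rewrite lift_set2.
have [bnd' | ->] := boundary_lift n3 ab bnd; last by rewrite eqxx.
by rewrite diagonalE ?ltn_lift // bnd'.
Qed.

Lemma diagonal_unlift (d : {set 'I_n}) : (3 <= n)%N ->
  is_diagonal d -> i \notin d -> d != ear_cover i ->
  exists2 d', is_diagonal d' & d = lift i @: d'.
Proof.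
move=> n3 dd; have [a [b [_ Ed _]]] := diagonalP dd; subst d.
rewrite !inE negb_or => /andP [ia ib].
have [a' Ea _] := unlift_some ia; have [b' Eb _] := unlift_some ib.
rewrite Ea Eb -lift_set2 in dd * => not_ear.
by exists [set a'; b'] => //; exact: diagonal_of_lift.
Qed.

End DeleteVertex.

Lemma triangulation_add_ear n (i : 'I_n) (T : {set {set 'I_n.-1}}) : (4 <= n)%N ->
  triangulation T ->
  triangulation (ear_cover i |: [set lift i @: e | e : {set 'I_n.-1} in T]).
Proof.
move=> n4 [diagT [nocrossT maxT]]; have n3 : (3 <= n)%N by apply: ltnW.
have edgeT e : e \in T -> is_edge e by move/diagT/andP => [].
split; [|split].
- move=> e /setU1P [-> | /imsetP [e' /diagT ? ->]].
    exact: ear_cover_diagonal.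
  exact: diagonal_lift.
- move=> e f /setU1P [-> | /imsetP [e' e'T ->]] /setU1P [-> | /imsetP [f' f'T ->]].
  + by apply: nocross_refl; case/andP: (ear_cover_diagonal i n4).
  + exact: ear_cover_nocross_lift (edgeT _ f'T).
  + by rewrite crossC; exact: ear_cover_nocross_lift (edgeT _ e'T).
  + by rewrite cross_lift ?edgeT //; exact: nocrossT.
- move=> d dd d_notin.
  case: (boolP (i \in d)) => [id | nid].
    by exists (ear_cover i); [rewrite setU11 | exact: cross_ear_cover].
  have not_ear : d != ear_cover i by apply: contraNneq d_notin => ->; rewrite setU11.
  have [d' dd' Ed] := diagonal_unlift n3 dd nid not_ear.
  have d'_notin : d' \notin T.
    by apply: contra d_notin => d'T; rewrite Ed in_setU1 imset_f ?orbT.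
  have [t tT cross_d't] := maxT _ dd' d'_notin.
  exists (lift i @: t); first by rewrite in_setU1 imset_f ?orbT.
  by rewrite Ed cross_lift //; [case/andP: dd' | apply: edgeT].
Qed.

Definition contract n (i : 'I_n) (B : {set {set 'I_n}}) : {set {set 'I_n.-1}} :=
  [set e : {set 'I_n.-1} | lift i @: e \in B].

Lemma blocker_contract n (i : 'I_n) (B : {set {set 'I_n}}) : (4 <= n)%N ->
  blocker B -> ear_cover i \notin B -> blocker (contract i B).
Proof.
move=> n4 [diagB hitB] not_ear; split.
  move=> e; rewrite inE => eB; apply: diagonal_of_lift (ltnW n4) (diagB _ eB) _.
  by apply: contraNneq not_ear => <-.
move=> T triT; have [e eB] := hitB _ (triangulation_add_ear i n4 triT).
case/setU1P => [ear | /imsetP [t tT Ee]]; first by rewrite -ear eB in not_ear.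
by exists t; rewrite // inE -Ee.
Qed.

Lemma card_contract n (i : 'I_n) (B : {set {set 'I_n}}) : (3 <= n)%N ->
  (forall e, e \in B -> is_diagonal e) -> ear_cover i \notin B ->
  #|B| = (#|contract i B| + deg B i)%N.
Proof.
move=> n3 diagB not_ear.
have -> : deg B i = #|B :&: [set e : {set 'I_n} | i \in e]|.
  by apply: eq_card => e; rewrite !inE.
rewrite -(cardsID [set e : {set 'I_n} | i \in e] B) addnC; congr (_ + _).
have -> : B :\: [set e : {set 'I_n} | i \in e] =
          [set lift i @: e | e : {set 'I_n.-1} in contract i B].
  apply/setP => d; rewrite !inE; apply/andP/imsetP => [[nid dB] | [d' d'B ->]].
    have not_ear' : d != ear_cover i by apply: contraNneq not_ear => <-.
    have [d' _ Ed] := diagonal_unlift n3 (diagB _ dB) nid not_ear'.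
    by exists d'; rewrite // inE -Ed.
  rewrite inE in d'B; split => //.
  by apply/imsetP => -[x _ ix]; move: (neq_lift i x); rewrite -ix eqxx.
by rewrite card_imset //; apply: imset_inj; exact: lift_inj.
Qed.

Definition fan n (j : 'I_n) : {set {set 'I_n}} := [set e | is_diagonal e && (j \in e)].

Lemma fan_cross n (j : 'I_n) (d : {set 'I_n}) :
  is_diagonal d -> j \notin d -> exists2 f, f \in fan j & cross d f.
Proof.
case/diagonalP => a [b [ab -> nb]]; rewrite !inE negb_or !eq_ordE => /andP [ja jb].
move: nb; rewrite boundaryE // => nb; have bn := ltn_ord b.
(* Since (a, b) is not a side, each of the two arcs cut out by a and b has an
   inner vertex; join j to one on the opposite arc. *)
have [x hx] : exists x : 'I_n,
    ((a < j < b) && ((b < x) || (x < a))) || (((j < a) || (b < j)) && (x == a.+1 :> nat)).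
  case: (boolP (a < j < b)%N) => hj; last first.
    have xn : (a.+1 < n)%N by lia.
    by exists (Ordinal xn) => /=; lia.
  case: (posnP a) => a0; last first.
    have xn : (0 < n)%N by lia.
    by exists (Ordinal xn) => /=; lia.
  have xn : (n.-1 < n)%N by lia.
  by exists (Ordinal xn) => /=; lia.
have : [&& j != x, ~~ is_boundary [set j; x] & cross [set a; b] [set j; x]].
  case: (ltngtP j x) => [jx | xj | /val_inj jx].
  - by rewrite boundaryE // crossE // !eq_ordE; lia.
  - by rewrite setUC boundaryE // crossE // !eq_ordE; lia.
  - by subst x; lia.
case/and3P => jx nbx cx; exists [set j; x] => //.
by rewrite inE set21 andbT /is_diagonal is_edge_set2.
Qed.

Lemma triangulation_fan n (j : 'I_n) : triangulation (fan j).
Proof.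
split; [|split].
- by move=> e; rewrite inE => /andP [].
- move=> e f; rewrite !inE.
  move=> /andP [/diagonalP [a [b [ab -> _]]] ja] /andP [/diagonalP [c [d [cd -> _]]] jc].
  by move: ja jc; rewrite !inE crossE // !eq_ordE; lia.
- by move=> d dd; rewrite inE dd /=; exact: fan_cross.
Qed.

Lemma deg_leq_card n (B : {set {set 'I_n}}) (j : 'I_n) : (deg B j <= #|B|)%N.
Proof. by apply: subset_leq_card; apply/subsetP => e; rewrite inE => /andP []. Qed.

Lemma blocker_deg_gt0 n (B : {set {set 'I_n}}) (j : 'I_n) : blocker B -> (0 < deg B j)%N.
Proof.
case=> _ hitB; have [e eB] := hitB _ (triangulation_fan j).
by rewrite inE => /andP [_ je]; apply/card_gt0P; exists e; rewrite inE eB je.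
Qed.

Lemma ear_cover_inj_interior n (k k' : 'I_n) : (3 <= n)%N ->
  (0 < k < n.-1)%N -> (0 < k' < n.-1)%N -> ear_cover k = ear_cover k' -> k = k'.
Proof.
move=> n3 hk hk'.
have [x [y [xy -> hx]]] := ear_cover_sorted k n3.
have [x' [y' [xy' -> hx']]] := ear_cover_sorted k' n3.
by move/eqP; rewrite set2_eqE !eq_ordE => e; apply: val_inj => /=; move: hx hx' e; lia.
Qed.

Lemma card_ge_interior_ears n (B : {set {set 'I_n}}) : (3 <= n)%N ->
  (forall k : 'I_n, (0 < k < n.-1)%N -> ear_cover k \in B) -> (n - 2 <= #|B|)%N.
Proof.
move=> n3 earsB.
have lt_succ (k : 'I_(n - 2)) : (k.+1 < n)%N by have := ltn_ord k; lia.
pose g k := Ordinal (lt_succ k).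
have g_interior k : (0 < g k < n.-1)%N by rewrite /=; have := ltn_ord k; lia.
have ear_g_inj : injective (@ear_cover n \o g).
  move=> k k' /(ear_cover_inj_interior n3 (g_interior k) (g_interior k')) /(congr1 val).
  by move=> /= [/val_inj].
have : (@ear_cover n \o g) @: [set: 'I_(n - 2)] \subset B.
  by apply/subsetP => e /imsetP [k _ ->]; exact: earsB (g_interior k).
by move/subset_leq_card; rewrite card_imset // cardsT card_ord.
Qed.

Lemma blocker_card_ge n (B : {set {set 'I_n}}) : blocker B -> (n - 2 <= #|B|)%N.
Proof.
elim: n B => [|m IH] B blockerB; first by [].
case: (leqP m.+1 3) => [le_m3 | m4].
  by have := leq_trans (blocker_deg_gt0 ord0 blockerB) (deg_leq_card B ord0); lia.
case: (boolP [forall k : 'I_m.+1, (0 < k < m)%N ==> (ear_cover k \in B)]).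
  move=> /forallP earsB; apply: card_ge_interior_ears (ltnW m4) _ => k.
  exact/implyP/earsB.
case/forallPn => k; rewrite negb_imply => /andP [_ not_ear].
rewrite (card_contract (ltnW m4) blockerB.1 not_ear).
apply: leq_trans _ (leq_add (IH _ (blocker_contract m4 blockerB not_ear))
                            (blocker_deg_gt0 k blockerB)).
lia.
Qed.

Theorem mainTheorem11 (n : nat) (B : {set {set 'I_n}}) (i : 'I_n) :
  (3 <= n)%N -> nk_blocker B n.-1 -> ear_cover i \notin B -> (deg B i <= 2)%N.
Proof.
move=> n3 [blockerB [_ cardB]] not_ear.
case: (leqP n 3) => [le_n3 | n4].
  by have := deg_leq_card B i; rewrite cardB; lia.
have := card_contract (ltnW n4) blockerB.1 not_ear.
have := blocker_card_ge (blocker_contract n4 blockerB not_ear).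
by rewrite cardB; lia.
Qed.
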